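(* For all real numbers $x,y$ with $|x|+|y|\le 1$, \[ \left|1+\frac x2-\sqrt{1+x+y}\right| \le 1-\frac{|x|}2-\sqrt{1-|x|-|y|}. \] *)

From Stdlib Require Export Reals.

(* Both sides are halved squares in disguise: with [s = sqrt (1 + x + y)] and
   [t = sqrt (1 - |x| - |y|)] one has [1 + x/2 - s = ((1 - s)^2 - y) / 2] and
   [1 - |x|/2 - t = ((1 - t)^2 + |y|) / 2].  So it suffices that
   [(1 - s)^2 <= (1 - t)^2], i.e. [t <= s <= 2 - t]; the first holds because
   the radicands are ordered, the second because their sum is at most 2. *)
From Stdlib Require Import Reals Lra Psatz.
Open Scope R_scope.

Lemma sqr_one_minus_sqrt (u : R) :
  0 <= u -> (1 - sqrt u) ^ 2 = 1 + u - 2 * sqrt u.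
Proof.
  intro Hu.
  pose proof (sqrt_sqrt u Hu).
  nra.
Qed.

Lemma sqrt_add_sqrt_le_2 (p q : R) :
  0 <= p -> 0 <= q -> p + q <= 2 -> sqrt p + sqrt q <= 2.
Proof.
  intros Hp Hq Hpq.
  pose proof (sqrt_sqrt p Hp). pose proof (sqrt_sqrt q Hq).
  pose proof (sqrt_pos p). pose proof (sqrt_pos q).
  assert (Hsq : (sqrt p + sqrt q) ^ 2 <= 4)
    by (pose proof (pow2_ge_0 (sqrt p - sqrt q)); nra).
  nra.
Qed.

Lemma sqr_one_minus_sqrt_le (p q : R) :
  0 <= q <= p -> p + q <= 2 -> (1 - sqrt p) ^ 2 <= (1 - sqrt q) ^ 2.
Proof.
  intros [Hq Hqp] Hpq.
  assert (Hts : sqrt q <= sqrt p) by (apply sqrt_le_1_alt; exact Hqp).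
  assert (Hst : sqrt p + sqrt q <= 2) by (apply sqrt_add_sqrt_le_2; lra).
  (* (1 - s)^2 - (1 - t)^2 = (t - s) (2 - s - t) *)
  nra.
Qed.

Theorem lemma8 (x y : R) (h : Rabs x + Rabs y <= 1) :
  Rabs (1 + x / 2 - sqrt (1 + x + y)) <= 1 - Rabs x / 2 - sqrt (1 - Rabs x - Rabs y).
Proof.
  pose proof (Rle_abs x) as Hx. pose proof (Rle_abs (- x)) as Hx'.
  pose proof (Rle_abs y) as Hy. pose proof (Rle_abs (- y)) as Hy'.
  rewrite Rabs_Ropp in Hx', Hy'.
  assert (Hle : 0 <= 1 - Rabs x - Rabs y <= 1 + x + y) by lra.
  assert (Hsum : (1 + x + y) + (1 - Rabs x - Rabs y) <= 2) by lra.
  pose proof (sqr_one_minus_sqrt_le _ _ Hle Hsum) as Hsq.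
  pose proof (pow2_ge_0 (1 - sqrt (1 + x + y))) as Hs.
  pose proof (pow2_ge_0 (1 - sqrt (1 - Rabs x - Rabs y))) as Ht.
  rewrite !sqr_one_minus_sqrt in Hsq by lra.
  rewrite sqr_one_minus_sqrt in Hs, Ht by lra.
  apply Rabs_le; split; lra.
Qed.
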